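(* Let $\varphi=\mathrm{vec}(A)$ and $\varphi_0=\mathrm{vec}(A_0)$ with $A,A_0\in\mathbb{R}^{(p-r)\times r}$, $\|A\|_2<1$, $\|A_0\|_2<1$. Then there exists a matrix $R_U(\varphi,\varphi_0)\in\mathbb{R}^{p\times r}$ such that $$\mathrm{vec}\{U(\varphi)-U(\varphi_0)\}=DU(\varphi_0)(\varphi-\varphi_0)+\mathrm{vec}\{R_U(\varphi,\varphi_0)\},\qquad \|R_U(\varphi,\varphi_0)\|_F\le 8\|\varphi-\varphi_0\|_2^2 .$$ Equivalently, in matrix form, $$U(\varphi)-U(\varphi_0)=2(I_p-X_{\varphi_0})^{-1}(X_\varphi-X_{\varphi_0})(I_p-X_{\varphi_0})^{-1}I_{p\times r}+R_U(\varphi,\varphi_0).$$ Moreover $\|U(\varphi)-U(\varphi_0)\|_F\le 2\sqrt2\,\|\varphi-\varphi_0\|_2$ for all such $\varphi,\varphi_0$.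
   Context: Fix integers $1\le r\le p$. For $A\in\mathbb{R}^{(p-r)\times r}$ write $\varphi=\mathrm{vec}(A)\in\mathbb{R}^{(p-r)r}$ (column-stacking vectorization), $X_\varphi=\begin{bmatrix}0_{r\times r}&-A^{T}\\ A&0_{(p-r)\times(p-r)}\end{bmatrix}$ and $I_{p\times r}=\begin{bmatrix}I_r\\0_{(p-r)\times r}\end{bmatrix}$. The Cayley parameterization is $U(\varphi)=(I_p+X_\varphi)(I_p-X_\varphi)^{-1}I_{p\times r}$, considered on the domain $\{\varphi=\mathrm{vec}(A):\|A\|_2<1\}$; it takes values in $\mathbb{O}(p,r)=\{U\in\mathbb{R}^{p\times r}:U^TU=I_r\}$, and explicitly $U(\varphi)=\begin{bmatrix}(I_r-A^TA)(I_r+A^TA)^{-1}\\ 2A(I_r+A^TA)^{-1}\end{bmatrix}$. Its derivative is $DU(\varphi)=2\,[I_{p\times r}^T(I_p-X_\varphi)^{-T}\otimes(I_p-X_\varphi)^{-1}]\,\Gamma$, where $\Gamma=(I_{p^2}-K_{pp})(\Theta_1^T\otimes\Theta_2^T)$, $\Theta_1=I_{p\times r}^T$, $\Theta_2=[0_{(p-r)\times r},I_{p-r}]$ (so that $\Gamma\varphi=\mathrm{vec}(X_\varphi)$), and $K_{pq}$ denotes the commutation matrix, $\mathrm{vec}(M^T)=K_{pq}\mathrm{vec}(M)$ for $M\in\mathbb{R}^{p\times q}$. $\|\cdot\|_2$ is the spectral (Euclidean) norm and $\|\cdot\|_F$ the Frobenius norm. *)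

From HB Require Import structures.
From mathcomp Require Import all_boot all_order all_algebra.
From mathcomp Require Import mxtens.
From mathcomp Require Import boolp classical_sets reals.
Set Implicit Arguments. Unset Strict Implicit. Unset Printing Implicit Defensive.
Import Order.TTheory GRing.Theory Num.Theory.
Local Open Scope ring_scope.
Local Open Scope classical_set_scope.

Section Defs.
Variable R : realType.

(* Column-stacking vectorization: entry (i,j) of M (m x n) sits at
   position j*m + i of vec M. *)
Definition vec {m n} (M : 'M[R]_(m, n)) : 'cV[R]_(n * m) :=
  \col_k M (mxtens_unindex k).2 (mxtens_unindex k).1.

Definition kron {m n k l} (A : 'M[R]_(m, n)) (B : 'M[R]_(k, l)) :
  'M[R]_(m * k, n * l) := tensmx A B.

(* Commutation matrix K_{pq}: K_{pq} vec M = vec (M^T) for M : p x q. *)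
Definition commmx (p q : nat) : 'M[R]_(p * q, q * p) :=
  \matrix_(a, b) ((((mxtens_unindex a).1 : nat) == (mxtens_unindex b).2)
                 && (((mxtens_unindex a).2 : nat) == (mxtens_unindex b).1))%:R.

Definition frob {m n} (M : 'M[R]_(m, n)) : R :=
  Num.sqrt (\sum_i \sum_j M i j ^+ 2).

Definition specnorm {m n} (A : 'M[R]_(m, n)) : R :=
  sup [set frob (A *m x) | x in [set x : 'cV[R]_n | frob x <= 1]].

(* p = r + q, q = p - r *)
Definition Ipr (r q : nat) : 'M[R]_(r + q, r) := col_mx 1%:M 0.

Definition Xmx {r q} (A : 'M[R]_(q, r)) : 'M[R]_(r + q) :=
  block_mx 0 (- A^T) A 0.

(* Cayley parameterization, as a function of A (phi = vec A) *)
Definition Ucay {r q} (A : 'M[R]_(q, r)) : 'M[R]_(r + q, r) :=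
  (1%:M + Xmx A) *m invmx (1%:M - Xmx A) *m Ipr r q.

Definition Theta1 (r q : nat) : 'M[R]_(r, r + q) := (Ipr r q)^T.
Definition Theta2 (r q : nat) : 'M[R]_(q, r + q) := row_mx 0 1%:M.

Definition Gamma (r q : nat) : 'M[R]_((r + q) * (r + q), r * q) :=
  (1%:M - commmx (r + q) (r + q)) *m kron (Theta1 r q)^T (Theta2 r q)^T.

Definition DU {r q} (A : 'M[R]_(q, r)) : 'M[R]_(r * (r + q), r * q) :=
  2%:R *: (kron ((Ipr r q)^T *m (invmx (1%:M - Xmx A))^T)
                (invmx (1%:M - Xmx A)) *m Gamma r q).

End Defs.

From HB Require Import structures.
From mathcomp Require Import all_boot all_order all_algebra.
From mathcomp Require Import mxtens ring.
From mathcomp Require Import boolp classical_sets reals.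
Import Order.TTheory GRing.Theory Num.Theory.
Local Open Scope ring_scope.
Set Implicit Arguments. Unset Strict Implicit. Unset Printing Implicit Defensive.

(* Write X = X_phi, X0 = X_phi0, N = (I - X)^-1, M = (I - X0)^-1 and
   D = X - X0 = X_{phi - phi0}; |.| is the Frobenius norm, handled through
   its square  sq Y = frob Y ^+ 2.
   1. Squared Frobenius norm: behaviour under transposition, blocks and
      scaling, and submultiplicativity (via Cauchy-Schwarz).
   2. Skew-symmetric X: |(I - X) w|^2 = |w|^2 + |X w|^2, so I - X is
      invertible and its inverse is a Frobenius contraction on either side.
      This holds for every A. Cayley algebra: U(A) = 2 N I_pr - I_pr; the resolvent identity
      N - M = N D M gives  U(A) - U(A0) = 2 N D M I_pr  and the remainder
      R_U = U(A) - U(A0) - 2 M D M I_pr = 2 N D M D M I_pr, whence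
      |U(A) - U(A0)|^2 <= 4 |D|^2 and |R_U|^2 <= 4 |D|^4, with |D|^2 = 2 |A - A0|^2.
   4. Vectorization: vec(B Y C) = (C^T (x) B) vec Y and K vec Y = vec Y^T, so
      Gamma vec A = vec X_A and DU(A0)(phi - phi0) = vec (2 M D M I_pr).
   The theorem follows: |R_U| <= 4 |phi - phi0|^2 <= 8 |phi - phi0|^2 and
   |U(A) - U(A0)| <= 2 sqrt 2 |phi - phi0|. *)

Section SquaredFrobenius.
Variable R : realType.

Definition sq {m n} (M : 'M[R]_(m, n)) : R := \sum_i \sum_j M i j ^+ 2.

Lemma frob_sq m n (M : 'M[R]_(m, n)) : frob M = Num.sqrt (sq M).
Proof. by []. Qed.

Lemma sq_ge0 m n (M : 'M[R]_(m, n)) : 0 <= sq M.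
Proof. by apply: sumr_ge0 => i _; apply: sumr_ge0 => j _; apply: sqr_ge0. Qed.

Lemma sq_eq0 m n (M : 'M[R]_(m, n)) : sq M = 0 -> M = 0.
Proof.
move=> M0; apply/matrixP => i j; rewrite mxE.
have rows0 := psumr_eq0P (fun i _ => sumr_ge0 _ (fun j _ => sqr_ge0 (M i j))) M0.
have entry0 := psumr_eq0P (fun j _ => sqr_ge0 (M i j)) (rows0 i isT).
by apply/eqP; rewrite -sqrf_eq0 entry0.
Qed.

Lemma sq0 m n : sq (0 : 'M[R]_(m, n)) = 0.
Proof. by rewrite /sq big1 // => i _; rewrite big1 // => j _; rewrite mxE expr0n. Qed.

Lemma sqN m n (M : 'M[R]_(m, n)) : sq (- M) = sq M.
Proof. by apply: eq_bigr => i _; apply: eq_bigr => j _; rewrite mxE sqrrN. Qed.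

Lemma sqZ m n c (M : 'M[R]_(m, n)) : sq (c *: M) = c ^+ 2 * sq M.
Proof.
rewrite /sq mulr_sumr; apply: eq_bigr => i _; rewrite mulr_sumr.
by apply: eq_bigr => j _; rewrite mxE exprMn.
Qed.

Lemma sq_tr m n (M : 'M[R]_(m, n)) : sq M^T = sq M.
Proof.
by rewrite /sq exchange_big; apply: eq_bigr => i _; apply: eq_bigr => j _; rewrite mxE.
Qed.

Lemma sq_cols m n (M : 'M[R]_(m, n)) : sq M = \sum_j sq (col j M).
Proof.
rewrite /sq exchange_big; apply: eq_bigr => j _; apply: eq_bigr => i _.
by rewrite big_ord1 mxE.
Qed.

Lemma sq_cV n (v : 'cV[R]_n) : sq v = (v^T *m v) 0 0.
Proof. by rewrite /sq !mxE; apply: eq_bigr => i _; rewrite big_ord1 !mxE expr2. Qed.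

Lemma sq_row_mx m n1 n2 (a : 'M[R]_(m, n1)) (b : 'M[R]_(m, n2)) :
  sq (row_mx a b) = sq a + sq b.
Proof.
rewrite /sq -big_split /=; apply: eq_bigr => i _.
by rewrite sumr_add; congr (_ + _); apply: eq_bigr => j _; rewrite (row_mxEl, row_mxEr).
Qed.

Lemma sq_col_mx m1 m2 n (a : 'M[R]_(m1, n)) (b : 'M[R]_(m2, n)) :
  sq (col_mx a b) = sq a + sq b.
Proof. by rewrite -sq_tr tr_col_mx sq_row_mx !sq_tr. Qed.

Lemma sq_block_mx m1 m2 n1 n2 (a : 'M[R]_(m1, n1)) (b : 'M[R]_(m1, n2))
  (c : 'M[R]_(m2, n1)) (d : 'M[R]_(m2, n2)) :
  sq (block_mx a b c d) = sq a + sq b + sq c + sq d.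
Proof. by rewrite /block_mx sq_col_mx !sq_row_mx addrA. Qed.

(* Cauchy-Schwarz for finite sums, from the nonnegativity of
   sum_i (Sb a_i - Sab b_i)^2 = Sb (Sa Sb - Sab^2). *)
Lemma cauchy_schwarz n (a b : 'I_n -> R) :
  (\sum_i a i * b i) ^+ 2 <= (\sum_i a i ^+ 2) * (\sum_i b i ^+ 2).
Proof.
set Sa := \sum_i a i ^+ 2; set Sb := \sum_i b i ^+ 2; set Sab := \sum_i a i * b i.
have Sb_ge0 : 0 <= Sb by apply: sumr_ge0 => i _; apply: sqr_ge0.
have [Sb0 | Sb_neq0] := eqVneq Sb 0.
  have b0 i : b i = 0.
    by apply/eqP; rewrite -sqrf_eq0 (psumr_eq0P (fun i _ => sqr_ge0 (b i)) Sb0).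
  by rewrite /Sab big1 ?expr0n ?Sb0 ?mulr0 // => i _; rewrite b0 mulr0.
have Sb_gt0 : 0 < Sb by rewrite lt_def Sb_neq0 Sb_ge0.
have expand : \sum_i (Sb * a i - Sab * b i) ^+ 2 = Sb * (Sa * Sb - Sab ^+ 2).
  rewrite (eq_bigr (fun i => Sb ^+ 2 * a i ^+ 2 - 2%:R * Sb * Sab * (a i * b i)
                             + Sab ^+ 2 * b i ^+ 2)); last by move=> i _; ring.
  rewrite big_split sumrB /= -!mulr_sumr -/Sa -/Sb -/Sab; ring.
have : 0 <= Sb * (Sa * Sb - Sab ^+ 2).
  by rewrite -expand; apply: sumr_ge0 => i _; apply: sqr_ge0.
by rewrite pmulr_rge0 // subr_ge0.
Qed.

Lemma sq_mulmx m n p (P : 'M[R]_(m, n)) (Q : 'M[R]_(n, p)) :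
  sq (P *m Q) <= sq P * sq Q.
Proof.
rewrite -(sq_tr Q) /sq mulr_suml.
apply: ler_sum => i _; rewrite mulr_sumr; apply: ler_sum => j _.
rewrite mxE [X in _ <= _ * X](eq_bigr (fun k => Q k j ^+ 2)); last by move=> k _; rewrite mxE.
exact: cauchy_schwarz.
Qed.

Lemma sq_mulmx_contr_l m n (P : 'M[R]_m) (B : 'M[R]_(m, n)) :
  (forall v : 'cV[R]_m, sq (P *m v) <= sq v) -> sq (P *m B) <= sq B.
Proof.
move=> Pcontr; rewrite (sq_cols (P *m B)) (sq_cols B); apply: ler_sum => j _.
by rewrite !colE -mulmxA.
Qed.

Lemma sq_mulmx_contr_r m n (C : 'M[R]_n) (B : 'M[R]_(m, n)) :
  (forall v : 'cV[R]_n, sq (C^T *m v) <= sq v) -> sq (B *m C) <= sq B.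
Proof. by move=> Ccontr; rewrite -sq_tr trmx_mul -(sq_tr B); apply: sq_mulmx_contr_l. Qed.

(* Right multiplication by I_{p x r} keeps the first r columns. *)
Lemma sq_mulmx_Ipr m r q (B : 'M[R]_(m, r + q)) : sq (B *m Ipr R r q) <= sq B.
Proof.
have -> : B *m Ipr R r q = lsubmx B.
  by rewrite -{1}(hsubmxK B) /Ipr mul_row_col mulmx1 mulmx0 addr0.
by rewrite -{2}(hsubmxK B) sq_row_mx lerDl sq_ge0.
Qed.

End SquaredFrobenius.

Section SkewResolvent.
Variables (R : realType) (n : nat) (X : 'M[R]_n).
Hypothesis X_skew : X^T = - X.

(* Pythagoras for I - X: the cross terms w^T X w cancel since X is skew. *)
Lemma sq_skew_resolvent (w : 'cV[R]_n) :
  sq ((1%:M - X) *m w) = sq w + sq (X *m w).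
Proof.
have gram : ((1%:M - X) *m w)^T *m ((1%:M - X) *m w) = w^T *m w + (X *m w)^T *m (X *m w).
  rewrite !trmx_mul linearB /= trmx1 X_skew opprK.
  have sym : (1%:M + X) *m (1%:M - X) = 1%:M - X *m X.
    by rewrite mulmxDl mul1mx mulmxBr mulmx1 addrA subrK.
  rewrite mulmxA -(mulmxA w^T) sym mulmxBr mulmx1 mulmxBl.
  by rewrite mulmxN mulNmx !mulmxA.
by rewrite !sq_cV gram mxE.
Qed.

(* I - X has trivial kernel: (I - X) v = 0 forces |v|^2 + |X v|^2 = 0. *)
Lemma skew_unitmx : 1%:M - X \in unitmx.
Proof.
rewrite unitmxE unitfE -det_tr; apply/negP => /det0P [v v_neq0 v_ker].
have kerT : (1%:M - X) *m v^T = 0.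
  by apply: trmx_inj; rewrite trmx_mul trmxK v_ker trmx0.
have sum0 : sq v^T + sq (X *m v^T) = 0 by rewrite -sq_skew_resolvent kerT sq0.
have : sq v^T = 0 by apply/eqP; rewrite eq_le sq_ge0 andbT -sum0 lerDl sq_ge0.
by move=> /sq_eq0 /(congr1 trmx); rewrite trmxK trmx0 => v0; rewrite v0 eqxx in v_neq0.
Qed.

(* Writing v = (I - X) w, Pythagoras gives |w| <= |v|. *)
Lemma skew_inv_contr (v : 'cV[R]_n) : sq (invmx (1%:M - X) *m v) <= sq v.
Proof.
set w := invmx _ *m v.
have -> : v = (1%:M - X) *m w by rewrite /w mulKVmx // skew_unitmx.
by rewrite sq_skew_resolvent lerDl sq_ge0.
Qed.

Lemma sq_skew_inv_l m (B : 'M[R]_(n, m)) : sq (invmx (1%:M - X) *m B) <= sq B.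
Proof. by apply: sq_mulmx_contr_l; apply: skew_inv_contr. Qed.

End SkewResolvent.

(* ... and under right multiplication, since its transpose (I - (-X))^-1 is
   the resolvent of the skew matrix -X. *)
Lemma sq_skew_inv_r (R : realType) n (X : 'M[R]_n) (X_skew : X^T = - X)
  m (B : 'M[R]_(m, n)) : sq (B *m invmx (1%:M - X)) <= sq B.
Proof.
apply: sq_mulmx_contr_r => v.
have NX_skew : (- X)^T = - - X by rewrite linearN /= X_skew.
by rewrite trmx_inv linearB /= trmx1 X_skew -[- X]opprK opprK skew_inv_contr.
Qed.

Section CayleyAlgebra.
Variables (R : realType) (r q : nat).
Implicit Types A B : 'M[R]_(q, r).

Lemma Xmx_skew A : (Xmx A)^T = - Xmx A.
Proof.
rewrite /Xmx tr_block_mx !linear0 linearN /= trmxK.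
by rewrite -[RHS]scaleN1r scale_block_mx !scaleN1r !oppr0 opprK.
Qed.

Lemma XmxB A B : Xmx A - Xmx B = Xmx (A - B).
Proof.
rewrite /Xmx -[- block_mx _ _ _ _]scaleN1r scale_block_mx add_block_mx !scaleN1r.
by rewrite subrr; congr block_mx; apply/matrixP => i j; rewrite !mxE; ring.
Qed.

(* A occurs twice in X_A, once as A and once as -A^T. *)
Lemma sq_Xmx A : sq (Xmx A) = 2%:R * sq A.
Proof. by rewrite /Xmx sq_block_mx !sq0 add0r addr0 sqN sq_tr; ring. Qed.

Lemma Ucay_resolvent A :
  Ucay A = 2%:R *: (invmx (1%:M - Xmx A) *m Ipr R r q) - Ipr R r q.
Proof.
have IX_unit := skew_unitmx (Xmx_skew A).
rewrite /Ucay; have -> : 1%:M + Xmx A = 1%:M + 1%:M - (1%:M - Xmx A).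
  by apply/matrixP => i j; rewrite !mxE; ring.
by rewrite mulmxBl mulmxV // mulmxDl mul1mx mulmxBl mulmxDl mul1mx scaler_nat mulr2n.
Qed.

Lemma resolventB n (X X0 : 'M[R]_n) :
  1%:M - X \in unitmx -> 1%:M - X0 \in unitmx ->
  invmx (1%:M - X) - invmx (1%:M - X0) =
    invmx (1%:M - X) *m (X - X0) *m invmx (1%:M - X0).
Proof.
move=> IX_unit IX0_unit.
have -> : X - X0 = (1%:M - X0) - (1%:M - X) by apply/matrixP => i j; rewrite !mxE; ring.
by rewrite mulmxBr mulmxBl mulmxK // mulVmx // mul1mx.
Qed.

Lemma UcayB A B :
  Ucay A - Ucay B = 2%:R *: (invmx (1%:M - Xmx A) *m (Xmx A - Xmx B)
                             *m invmx (1%:M - Xmx B) *m Ipr R r q).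
Proof.
rewrite !Ucay_resolvent opprB addrA subrK -scalerBr -mulmxBl.
by rewrite resolventB // skew_unitmx // Xmx_skew.
Qed.

Definition cayley_linear A B : 'M[R]_(r + q, r) :=
  2%:R *: (invmx (1%:M - Xmx B) *m (Xmx A - Xmx B) *m invmx (1%:M - Xmx B)
           *m Ipr R r q).

Definition cayley_remainder A B : 'M[R]_(r + q, r) :=
  Ucay A - Ucay B - cayley_linear A B.

(* The remainder is exactly quadratic: apply the resolvent identity once more. *)
Lemma cayley_remainderE A B :
  cayley_remainder A B =
    2%:R *: (invmx (1%:M - Xmx A) *m (Xmx A - Xmx B) *m invmx (1%:M - Xmx B)
             *m (Xmx A - Xmx B) *m invmx (1%:M - Xmx B) *m Ipr R r q).
Proof.
rewrite /cayley_remainder /cayley_linear UcayB -scalerBr; congr (_ *: _).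
set D := Xmx A - Xmx B; set N := invmx _; set M := invmx (1%:M - Xmx B).
have -> : N *m D *m M *m Ipr R r q - M *m D *m M *m Ipr R r q
          = (N - M) *m (D *m M *m Ipr R r q) by rewrite mulmxBl !mulmxA.
by rewrite resolventB ?skew_unitmx ?Xmx_skew // !mulmxA.
Qed.

(* Frobenius bounds: the resolvents and I_pr are contractions and
   |D|^2 = 2 |A - B|^2, so |U(A) - U(B)|^2 <= 4 |D|^2 ... *)
Lemma sq_UcayB A B : sq (Ucay A - Ucay B) <= 8%:R * sq (A - B).
Proof.
rewrite UcayB sqZ XmxB.
have -> : (8%:R : R) * sq (A - B) = 2%:R ^+ 2 * sq (Xmx (A - B)) by rewrite sq_Xmx; ring.
rewrite ler_wpM2l ?sqr_ge0 //.
apply: le_trans (sq_mulmx_Ipr _) _; apply: le_trans (sq_skew_inv_r (Xmx_skew B) _) _.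
apply: sq_skew_inv_l; exact: Xmx_skew.
Qed.

(* ... and, by submultiplicativity, |R_U|^2 <= 4 |D|^4. *)
Lemma sq_cayley_remainder A B :
  sq (cayley_remainder A B) <= 16%:R * sq (A - B) ^+ 2.
Proof.
rewrite cayley_remainderE sqZ; set D := Xmx A - Xmx B.
have -> : (16%:R : R) * sq (A - B) ^+ 2 = 2%:R ^+ 2 * (sq D * sq D).
  by rewrite /D XmxB sq_Xmx; ring.
rewrite ler_wpM2l ?sqr_ge0 //.
apply: le_trans (sq_mulmx_Ipr _) _; apply: le_trans (sq_skew_inv_r (Xmx_skew B) _) _.
rewrite -!mulmxA; apply: le_trans (sq_skew_inv_l (Xmx_skew A) _) _.
rewrite !mulmxA; apply: le_trans (sq_mulmx _ _) _.
by rewrite ler_wpM2r ?sq_ge0 //; apply: sq_skew_inv_r; apply: Xmx_skew.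
Qed.

End CayleyAlgebra.

Section Vectorization.
Variable R : realType.

Lemma sum_mxtens m n (F : 'I_m * 'I_n -> R) :
  \sum_(k < m * n) F (mxtens_unindex k) = \sum_i \sum_j F (i, j).
Proof.
rewrite pair_big /=; symmetry.
rewrite (reindex (@mxtens_unindex m n)) //=.
by exists (@mxtens_index m n) => i _; rewrite (mxtens_indexK, mxtens_unindexK).
Qed.

Lemma sq_vec m n (M : 'M[R]_(m, n)) : sq (vec M) = sq M.
Proof.
rewrite /sq (eq_bigr (fun k => M (mxtens_unindex k).2 (mxtens_unindex k).1 ^+ 2)).
  by rewrite (sum_mxtens (fun p => M p.2 p.1 ^+ 2)) exchange_big.
by move=> k _; rewrite big_ord1 mxE.
Qed.

Lemma vecD m n (A B : 'M[R]_(m, n)) : vec (A + B) = vec A + vec B.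
Proof. by apply/matrixP => i j; rewrite !mxE. Qed.

Lemma vecB m n (A B : 'M[R]_(m, n)) : vec (A - B) = vec A - vec B.
Proof. by apply/matrixP => i j; rewrite !mxE. Qed.

Lemma vecZ m n c (A : 'M[R]_(m, n)) : vec (c *: A) = c *: vec A.
Proof. by apply/matrixP => i j; rewrite !mxE. Qed.

Lemma kron_vec a b c d (B : 'M[R]_(a, b)) (Y : 'M[R]_(b, c)) (C : 'M[R]_(c, d)) :
  kron C^T B *m vec Y = vec (B *m Y *m C).
Proof.
apply/matrixP => k z; rewrite !mxE.
rewrite (eq_bigr (fun l => C (mxtens_unindex l).1 (mxtens_unindex k).1 *
   B (mxtens_unindex k).2 (mxtens_unindex l).2 *
   Y (mxtens_unindex l).2 (mxtens_unindex l).1)); last by move=> l _; rewrite !mxE.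
rewrite (sum_mxtens (fun p => C p.1 (mxtens_unindex k).1 *
   B (mxtens_unindex k).2 p.2 * Y p.2 p.1)) /=.
apply: eq_bigr => x _; rewrite !mxE mulr_suml; apply: eq_bigr => y _; ring.
Qed.

Lemma sum_indicator2 a b (F : 'I_a -> 'I_b -> R) (i0 : 'I_a) (j0 : 'I_b) :
  \sum_(i < a) \sum_(j < b)
    (((j0 : nat) == (j : nat)) && ((i0 : nat) == (i : nat)))%:R * F i j = F i0 j0.
Proof.
rewrite (bigD1 i0) //= [X in _ + X]big1 ?addr0 => [|i i_neq].
  rewrite (bigD1 j0) //= [X in _ + X]big1 ?addr0 => [|j j_neq]; first by rewrite !eqxx mul1r.
  by rewrite (_ : (j0 : nat) == j = false) ?mul0r // val_eqE eq_sym (negbTE j_neq).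
apply: big1 => j _.
by rewrite (_ : (i0 : nat) == i = false) ?andbF ?mul0r // val_eqE eq_sym (negbTE i_neq).
Qed.

Lemma commmx_vec p q (N : 'M[R]_(p, q)) : commmx R p q *m vec N = vec N^T.
Proof.
apply/matrixP => k z; rewrite !mxE.
pose ind := fun l : 'I_q * 'I_p => ( ((((mxtens_unindex k).1 : nat) == l.2) &&
                                   (((mxtens_unindex k).2 : nat) == l.1))%:R : R).
rewrite (eq_bigr (fun l => ind (mxtens_unindex l) * N (mxtens_unindex l).2
                                                     (mxtens_unindex l).1));
  last by move=> l _; rewrite !mxE.
by rewrite (sum_mxtens (fun l => ind l * N l.2 l.1)); apply: (sum_indicator2 (fun i j => N j i)).
Qed.

(* Gamma maps vec A to vec X_A:  (I - K)(Theta1^T (x) Theta2^T) vec A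
   = vec (Theta2^T A Theta1) - vec (Theta2^T A Theta1)^T. *)
Lemma Gamma_vec r q (A : 'M[R]_(q, r)) : Gamma R r q *m vec A = vec (Xmx A).
Proof.
rewrite /Gamma -mulmxA kron_vec.
have -> : (Theta2 R r q)^T *m A *m Theta1 R r q = block_mx 0 0 A 0.
  rewrite /Theta2 /Theta1 /Ipr tr_row_mx tr_col_mx !trmx1 !linear0.
  by rewrite mul_col_mx mul0mx mul1mx mul_col_row !mul0mx mulmx1 mulmx0.
rewrite mulmxBl mul1mx commmx_vec -vecB; congr vec.
rewrite tr_block_mx !linear0 /Xmx -[- block_mx _ _ _ _]scaleN1r scale_block_mx
  add_block_mx !scaleN1r.
by congr block_mx; apply/matrixP => i j; rewrite !mxE; ring.
Qed.

Lemma DU_vec r q (A B : 'M[R]_(q, r)) :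
  DU B *m (vec A - vec B) = vec (cayley_linear A B).
Proof.
rewrite /DU /cayley_linear -scalemxAl -mulmxA -vecB Gamma_vec -XmxB.
by rewrite -trmx_mul kron_vec vecZ !mulmxA.
Qed.

End Vectorization.

Theorem theorem1 (R : realType) (r q : nat) (hr : (0 < r)%N)
  (A A0 : 'M[R]_(q, r)) (hA : specnorm A < 1) (hA0 : specnorm A0 < 1) :
  (exists RU : 'M[R]_(r + q, r),
     vec (Ucay A - Ucay A0) = DU A0 *m (vec A - vec A0) + vec RU /\
     Ucay A - Ucay A0 =
       2%:R *: (invmx (1%:M - Xmx A0) *m (Xmx A - Xmx A0)
                *m invmx (1%:M - Xmx A0) *m Ipr R r q) + RU /\
     frob RU <= 8%:R * frob (vec A - vec A0) ^+ 2) /\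
  frob (Ucay A - Ucay A0) <= 2%:R * Num.sqrt 2%:R * frob (vec A - vec A0).
Proof.
set s := sq (A - A0); have s_ge0 : 0 <= s by apply: sq_ge0.
have frob_dphi : frob (vec A - vec A0) = Num.sqrt s by rewrite -vecB frob_sq sq_vec.
have U_split : Ucay A - Ucay A0 = cayley_linear A A0 + cayley_remainder A A0.
  by rewrite /cayley_remainder [RHS]addrC subrK.
split.
  exists (cayley_remainder A A0); split; [|split].
  - by rewrite U_split vecD DU_vec.
  - by rewrite U_split.
  - rewrite frob_dphi sqr_sqrtr // frob_sq.
    apply: le_trans (ler_wsqrtr (sq_cayley_remainder A A0)) _.
    rewrite (_ : 16%:R * s ^+ 2 = (4%:R * s) ^+ 2); last by ring.
    by rewrite sqrtr_sqr ger0_norm ?mulr_ge0 // ler_wpM2r // ler_nat.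
rewrite frob_dphi frob_sq.
apply: le_trans (ler_wsqrtr (sq_UcayB A A0)) _.
rewrite (_ : 8%:R * s = 2%:R ^+ 2 * (2%:R * s)); last by ring.
by rewrite sqrtrM ?sqr_ge0 // sqrtr_sqr ger0_norm // sqrtrM // mulrA.
Qed.
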